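(* Let $S\subseteq\mathbb{R}^{n-1}$ and let $P\in\mathbb{R}[\mathbf{x};x_n]$ have degree $d_n$ in $x_n$, $P=\sum_{k=0}^{d_n}c_k(\mathbf{x})x_n^k$. (1) If $c_{d_n}$ does not vanish at any point of $S$, then $P$ is projectively delineable on $S$ if and only if $P$ is delineable on $S$. (2) If $S$ is connected, $c_{d_n}$ vanishes identically on $S$, and $P$ is projectively delineable on $S$, then $P$ is delineable on $S$.
   Context: Write $\mathbf{x}=(x_1,\dots,x_{n-1})$; $E_{\mathbf{x}_0}P$ is the univariate polynomial in $x_n$ obtained by substituting $\mathbf{x}_0$ for $\mathbf{x}$. $\mathbb{RP}^1$ is the quotient of $\mathbb{R}^2\setminus\{(0,0)\}$ by proportionality with the quotient topology; $(u:v)$ is the class of $(u,v)$; $\infty=(1:0)$. With $d=\deg_{x_n}P$, $H^d(P)(\mathbf{x},x_n,y)=\sum_kc_k(\mathbf{x})x_n^ky^{d-k}$. A projective root of a binary form $g(u,v)$ is $(u_0:v_0)$ with $g(u_0,v_0)=0$, with multiplicity (for $g\ne0$) the largest $m$ such that $(v_0u-u_0v)^m$ divides $g$; projective roots of $E_{\mathbf{x}}P$ w.r.t. $d$ are those of $E_{\mathbf{x}}H^d(P)$. $Z_{\mathbb{R}}(P,S)=\{(\mathbf{x},x_n)\in S\times\mathbb{R}:P(\mathbf{x},x_n)=0\}$, $Z_{\mathbb{RP}^1}(P,S)=\{(\mathbf{x},(x_n:y))\in S\times\mathbb{RP}^1:H^d(P)(\mathbf{x},x_n,y)=0\}$. $P$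 is delineable on $S$ if there are $k\in\mathbb{N}$ and continuous $\theta_1,\dots,\theta_k:S\to\mathbb{R}$ with $Z_{\mathbb{R}}(P,S)$ the disjoint union of their graphs and, for each $l$, an $m_l\ge1$ such that $\theta_l(\mathbf{x})$ is a root of $E_{\mathbf{x}}P$ of multiplicity $m_l$ for all $\mathbf{x}\in S$. $P$ is projectively delineable on $S$ if there are $k\in\mathbb{N}$ and continuous $\theta_1,\dots,\theta_k:S\to\mathbb{RP}^1$ with $Z_{\mathbb{RP}^1}(P,S)$ the disjoint union of their graphs and, for each $l$, an $m_l\ge1$ such that $\theta_l(\mathbf{x})$ is a projective root of $E_{\mathbf{x}}P$ (w.r.t. $d$) of multiplicity $m_l$ for all $\mathbf{x}\in S$. *)

From HB Require Import structures.
From mathcomp Require Import all_boot all_order all_algebra.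
From mathcomp Require Import all_classical all_reals all_analysis.
From mathcomp Require mpoly.
Import (canonicals, coercions, hints) mpoly.

Set Implicit Arguments.
Unset Strict Implicit.
Unset Printing Implicit Defensive.

Import Order.TTheory GRing.Theory Num.Theory.
Import numFieldNormedType.Exports.
Local Open Scope classical_set_scope.
Local Open Scope ring_scope.

Section Defs.
Variables (R : realType) (m : nat).
(* m = n - 1 : the variables x = (x_1,...,x_m) live in 'rV[R]_m ;
   P is a polynomial in x_n with coefficients in R[x_1,...,x_m]. *)

Local Notation mpolyR := (mpoly.mpoly m R).

Definition Eval (x : 'rV[R]_m) (P : {poly mpolyR}) : {poly R} :=
  map_poly (mpoly.meval (fun i => x ord0 i)) P.

Definition cval (x : 'rV[R]_m) (c : mpolyR) : R := mpoly.meval (fun i => x ord0 i) c.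

Definition degn (P : {poly mpolyR}) : nat := (size P).-1.

Definition root_mult (p : {poly R}) (t : R) (mu : nat) : Prop :=
  p != 0 /\ (('X - t%:P) ^+ mu %| p) /\ ~~ (('X - t%:P) ^+ mu.+1 %| p).

Definition ZR (P : {poly mpolyR}) (S : set 'rV[R]_m) : set ('rV[R]_m * R) :=
  [set xt | S xt.1 /\ (Eval xt.1 P).[xt.2] = 0].

Definition delineable (P : {poly mpolyR}) (S : set 'rV[R]_m) : Prop :=
  exists (k : nat) (theta : 'I_k -> 'rV[R]_m -> R) (mu : 'I_k -> nat),
    (forall l, {within S, continuous (theta l)}) /\
    ZR P S = [set xt | exists l, S xt.1 /\ xt.2 = theta l xt.1] /\
    (forall l l' x, l != l' -> S x -> theta l x != theta l' x) /\
    (forall l, (1 <= mu l)%N /\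
       forall x, S x -> root_mult (Eval x P) (theta l x) (mu l)).

(* a point of RP^1 is an equivalence class of a nonzero pair under proportionality *)
Definition pclass (p : R * R) : set (R * R) :=
  [set q | q != (0, 0) /\ exists t : R, t != 0 /\ q = (t * p.1, t * p.2)].

Definition is_rp1 (c : set (R * R)) : Prop :=
  exists p : R * R, p != (0, 0) /\ c = pclass p.

(* quotient topology: a set U of points of RP^1 is open iff its preimage
   under the projection R^2 \ {0} -> RP^1 is open in R^2 \ {0}
   (equivalently in R^2, as R^2 \ {0} is open in R^2) *)
Definition open_rp1 (U : set (set (R * R))) : Prop :=
  open [set p : R * R | p != (0, 0) /\ U (pclass p)].

Definition continuous_rp1 (S : set 'rV[R]_m) (theta : 'rV[R]_m -> set (R * R)) : Prop :=
  forall U, open_rp1 U ->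
    exists V : set 'rV[R]_m, open V /\ S `&` (theta @^-1` U) = S `&` V.

(* binary forms as polynomials in u ('X, outer) with coefficients in R[v] *)
Definition bvar_u : {poly {poly R}} := 'X.
Definition bvar_v : {poly {poly R}} := ('X : {poly R})%:P.

Definition homog (d : nat) (p : {poly R}) : {poly {poly R}} :=
  \sum_(k < d.+1) (p`_k)%:P%:P * bvar_u ^+ k * bvar_v ^+ (d - k).

Definition beval (g : {poly {poly R}}) (p : R * R) : R := (g.[p.1%:P]).[p.2].

Definition bform_mult (g : {poly {poly R}}) (p : R * R) (mu : nat) : Prop :=
  let L := p.2%:P%:P * bvar_u - p.1%:P%:P * bvar_v in
  g != 0 /\ (exists h, g = h * L ^+ mu) /\ ~ (exists h, g = h * L ^+ mu.+1).

Definition HdP (P : {poly mpolyR}) (x : 'rV[R]_m) : {poly {poly R}} :=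
  homog (degn P) (Eval x P).

Definition proj_root_mult (P : {poly mpolyR}) (x : 'rV[R]_m) (c : set (R * R)) (mu : nat) : Prop :=
  exists p : R * R, p != (0, 0) /\ c = pclass p /\
    beval (HdP P x) p = 0 /\ bform_mult (HdP P x) p mu.

Definition ZRP1 (P : {poly mpolyR}) (S : set 'rV[R]_m) : set ('rV[R]_m * set (R * R)) :=
  [set xc | S xc.1 /\ exists p : R * R, p != (0, 0) /\ xc.2 = pclass p /\
                                        beval (HdP P xc.1) p = 0].

Definition proj_delineable (P : {poly mpolyR}) (S : set 'rV[R]_m) : Prop :=
  exists (k : nat) (theta : 'I_k -> 'rV[R]_m -> set (R * R)) (mu : 'I_k -> nat),
    (forall l x, S x -> is_rp1 (theta l x)) /\
    (forall l, continuous_rp1 S (theta l)) /\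
    ZRP1 P S = [set xc | exists l, S xc.1 /\ xc.2 = theta l xc.1] /\
    (forall l l' x, l != l' -> S x -> theta l x <> theta l' x) /\
    (forall l, (1 <= mu l)%N /\
       forall x, S x -> proj_root_mult P x (theta l x) (mu l)).

End Defs.

(* The chart (u : v) |-> u / v identifies RP^1 minus the point
   infinity = (1 : 0) homeomorphically with R, and carries the projective roots
   of E_x P to its real roots with the same multiplicities: dehomogenising at
   v = 1 sends H^d(E_x P) back to E_x P and (v0 u - u0 v)^mu to a unit multiple
   of (x_n - u0/v0)^mu.  The point infinity is a projective root exactly when
   c_d(x) = 0.  So if c_d never vanishes on S, projective and real root sections
   correspond one to one.  If c_d vanishes on a connected S, infinity is a root
   over every point and is carried by exactly one section there; as the sections
   are continuous and pairwise distinct, the set where a given section equals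
   infinity is open and closed in S, so a single section is constantly infinity
   and the others are the real root sections. *)

From HB Require Import structures.
From mathcomp Require Import all_boot all_order all_algebra.
From mathcomp Require Import all_classical all_reals all_analysis.
From mathcomp Require mpoly.
Import (canonicals, coercions, hints) mpoly.
From mathcomp Require Import ring zify.
Set Implicit Arguments.
Unset Strict Implicit.
Unset Printing Implicit Defensive.

Import Order.TTheory GRing.Theory Num.Theory.
Import numFieldNormedType.Exports.
Local Open Scope classical_set_scope.
Local Open Scope ring_scope.

Section ProjectiveLine.
Variable R : realType.
Implicit Types (p q : R * R) (a b t : R).

Lemma affine_pt_neq0 a : (a, 1) != (0, 0) :> R * R.
Proof. by rewrite xpair_eqE oner_eq0 andbF. Qed.

Lemma pclass_id p : p != (0, 0) -> pclass p p.
Proof. by move=> p0; split=> //; exists 1; rewrite oner_eq0 !mul1r; case: p {p0}. Qed.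

Lemma pclass_eq_scale p q : q != (0, 0) -> pclass p = pclass q ->
  exists2 t, t != 0 & q = (t * p.1, t * p.2).
Proof. by move=> q0 e; have := pclass_id q0; rewrite -e => -[_ [t []]]; exists t. Qed.

Lemma pclassZ p t : t != 0 -> pclass (t * p.1, t * p.2) = pclass p.
Proof.
move=> t0; apply/seteqP; split=> q /= [q0 [s [s0 qE]]]; split=> //; rewrite qE.
  by exists (s * t); rewrite mulf_neq0 // !mulrA.
by exists (s / t); rewrite mulf_neq0 ?invr_eq0 // !mulrA !divfK.
Qed.

Lemma pclass_affine p : p.2 != 0 -> pclass p = pclass (p.1 / p.2, 1).
Proof. by move=> p2; rewrite -(pclassZ (p.1 / p.2, 1) p2) /= mulr1 mulrC divfK. Qed.

Lemma pclass_affine_inj a b : pclass (a, 1) = pclass (b, 1) -> a = b.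
Proof.
move=> e; have [t _ [-> /esym]] := pclass_eq_scale (affine_pt_neq0 b) e.
by rewrite /= mulr1 => ->; rewrite mul1r.
Qed.

Lemma pclass_infty p : p != (0, 0) -> p.2 = 0 -> pclass p = pclass (1, 0).
Proof.
case: p => u v /= p0 v0; subst v.
have u0 : u != 0 by apply: contra p0 => /eqP ->.
by rewrite -(pclassZ (1, 0) u0) /= mulr1 mulr0.
Qed.

Lemma pclass_infty_snd p : p != (0, 0) -> pclass p = pclass (1, 0) -> p.2 = 0.
Proof. by move=> p0 /esym /(pclass_eq_scale p0) [t _ ->]; rewrite /= mulr0. Qed.

Lemma pclass_affine_neq_infty a : pclass (a, 1) <> pclass (1, 0).
Proof. by move/(pclass_infty_snd (affine_pt_neq0 a)) => /eqP; rewrite oner_eq0. Qed.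

Lemma pclass_cases p : p != (0, 0) ->
  pclass p = pclass (1, 0) \/ exists t, pclass p = pclass (t, 1).
Proof.
move=> p0; have [p2|p2] := eqVneq p.2 0; first by left; exact: pclass_infty.
by right; exists (p.1 / p.2); exact: pclass_affine.
Qed.

Lemma pclass_affine_eqE t p : p != (0, 0) -> pclass (t, 1) = pclass p ->
  p.2 != 0 /\ p.1 / p.2 = t.
Proof. by move=> p0 /(pclass_eq_scale p0) [s s0 ->]; rewrite /= mulr1 s0 mulrC mulKf. Qed.

Definition affine_coord (c : set (R * R)) : R := xget 0 [set t | c = pclass (t, 1)].

Lemma affine_coordK c t : c = pclass (t, 1) -> c = pclass (affine_coord c, 1).
Proof. by move=> ct; apply: (@xgetPex _ 0 [set t | c = pclass (t, 1)]); exists t. Qed.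

End ProjectiveLine.

Section Homogenization.
Variable R : realType.
Local Notation U := (bvar_u R).
Local Notation V := (bvar_v R).

Lemma homog_coef d (p : {poly R}) k :
  (homog d p)`_k = if (k <= d)%N then p`_k *: 'X^(d - k) else 0.
Proof.
have -> : homog d p = \poly_(k < d.+1) (p`_k *: 'X^(d - k)).
  rewrite /homog poly_def; apply: eq_bigr => i _.
  by rewrite /bvar_u /bvar_v -rmorphXn /= mulrAC -polyCM -!mul_polyC.
by rewrite coef_poly ltnS.
Qed.

Lemma homog_mulXsubC e t (q : {poly R}) : (size q <= e.+1)%N ->
  homog e.+1 (('X - t%:P) * q) = (U - t%:P%:P * V) * homog e q.
Proof.
move=> sq; apply/polyP => k.
have -> : t%:P%:P * V = (t%:P * 'X)%:P by rewrite /bvar_v polyCM.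
rewrite homog_coef !mulrBl !coefB !coefCM /bvar_u !coefXM !homog_coef.
case: k => [|j]; first by rewrite /= !subn0 -!mul_polyC polyCB polyCM exprS; ring.
rewrite /= subSS; have [lt_je|gt_je|->] := ltngtP j e.
- rewrite ltnS (ltnW lt_je) -!mul_polyC polyCB polyCM -(subnSK lt_je) exprS.
  ring.
- by rewrite ltnS leqNgt gt_je /= mulr0 subr0.
- by rewrite ltnS leqnn subnn (nth_default 0 sq) !(mulr0, subr0).
Qed.

Lemma homog_mulXsubCn e mu t (q : {poly R}) : (size q <= e.+1)%N ->
  homog (e + mu) (('X - t%:P) ^+ mu * q) = (U - t%:P%:P * V) ^+ mu * homog e q.
Proof.
move=> sq; elim: mu => [|mu IH]; first by rewrite addn0 !expr0 !mul1r.
rewrite addnS !exprS -!mulrA homog_mulXsubC ?IH //.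
apply: leq_trans (size_polyMleq _ _) _; rewrite size_exp_XsubC.
by move: sq; case: (size q) => [|s] /=; lia.
Qed.

Definition dehomog (g : {poly {poly R}}) : {poly R} := map_poly (horner_eval 1) g.

Lemma dehomogK d (p : {poly R}) : (size p <= d.+1)%N -> dehomog (homog d p) = p.
Proof.
move=> sp; apply/polyP => k; rewrite coef_map homog_coef /= horner_evalE.
case: ifP => kd; first by rewrite hornerZ hornerXn expr1n mulr1.
by rewrite horner0 nth_default // (leq_trans sp) // ltnNge kd.
Qed.

Lemma dehomog_XsubC t : dehomog (U - t%:P%:P * V) = 'X - t%:P.
Proof.
rewrite /dehomog rmorphB rmorphM /= /bvar_u /bvar_v !map_polyX !map_polyC /=.
by rewrite !horner_evalE hornerC hornerX mulr1.
Qed.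

Lemma homog_eq0 d (p : {poly R}) : (size p <= d.+1)%N -> (homog d p == 0) = (p == 0).
Proof.
move=> sp; apply/eqP/eqP => [h|->]; first by rewrite -(dehomogK sp) h /dehomog map_poly0.
by apply/polyP => k; rewrite homog_coef !coef0 scale0r; case: ifP.
Qed.

Lemma homog_dvdP d (p : {poly R}) t mu : p != 0 -> (size p <= d.+1)%N ->
  (exists h, homog d p = h * (U - t%:P%:P * V) ^+ mu) <-> ('X - t%:P) ^+ mu %| p.
Proof.
move=> p0 sp; split.
  case=> h eh; rewrite -(dehomogK sp) eh /dehomog rmorphM rmorphXn /=.
  by rewrite -[map_poly _ (_ - _)]/(dehomog _) dehomog_XsubC dvdp_mull.
case/dvdpP => q pE.
have q0 : q != 0 by apply: contra p0 => /eqP q0; rewrite pE q0 mul0r.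
have sq : size p = (size q + mu)%N.
  by rewrite pE size_mul ?expf_neq0 ?polyXsubC_eq0 // size_exp_XsubC addnS.
have sq0 : (0 < size q)%N by rewrite size_poly_gt0.
have sqd : (size q <= (d - mu).+1)%N by move: sp; rewrite sq; lia.
have dE : d = (d - mu + mu)%N by move: sp; rewrite sq; lia.
exists (homog (d - mu) q).
by rewrite pE mulrC [in LHS]dE homog_mulXsubCn // mulrC.
Qed.

Lemma beval_homog d (p : {poly R}) u v :
  beval (homog d p) (u, v) = \sum_(k < d.+1) p`_k * u ^+ k * v ^+ (d - k).
Proof.
rewrite /beval /homog /= !horner_sum; apply: eq_bigr => k _.
by rewrite /bvar_u /bvar_v !hornerE.
Qed.

Lemma beval_homog_affine d (p : {poly R}) u v : v != 0 -> (size p <= d.+1)%N ->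
  beval (homog d p) (u, v) = v ^+ d * p.[u / v].
Proof.
move=> v0 sp; rewrite beval_homog (horner_coef_wide _ sp) mulr_sumr.
apply: eq_bigr => [[k /= kd]] _.
have -> : v ^+ d = v ^+ (d - k) * v ^+ k by rewrite -exprD subnK // -ltnS.
have vk : v ^+ k != 0 by rewrite expf_neq0.
by rewrite expr_div_n; field.
Qed.

Lemma beval_homog_infty d (p : {poly R}) u :
  beval (homog d p) (u, 0) = p`_d * u ^+ d.
Proof.
rewrite beval_homog big_ord_recr /= subnn expr0 mulr1 big1 ?add0r //.
by move=> [k /= kd] _; rewrite expr0n subn_eq0 leqNgt kd mulr0.
Qed.

Lemma bform_mult_affine (g : {poly {poly R}}) u v mu : v != 0 ->
  bform_mult g (u, v) mu <-> bform_mult g (u / v, 1) mu.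
Proof.
move=> v0; rewrite /bform_mult /= !mul1r.
have eL : v%:P%:P * U - u%:P%:P * V = v%:P%:P * (U - (u / v)%:P%:P * V).
  by rewrite mulrBr mulrA -!polyCM mulrCA divff // mulr1.
have dvdE n : (exists h, g = h * (v%:P%:P * (U - (u / v)%:P%:P * V)) ^+ n) <->
    (exists h, g = h * (U - (u / v)%:P%:P * V) ^+ n).
  split=> -[h ->]; first by exists (h * v%:P%:P ^+ n); rewrite exprMn mulrA.
  exists (h * v^-1%:P%:P ^+ n); rewrite exprMn mulrA -[h * _ * _]mulrA.
  by rewrite -exprMn -!polyCM mulVf // expr1n mulr1.
by rewrite eL (dvdE mu) (dvdE mu.+1).
Qed.

Lemma bform_mult_homog d (p : {poly R}) u v mu : v != 0 -> (size p <= d.+1)%N ->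
  bform_mult (homog d p) (u, v) mu <-> root_mult p (u / v) mu.
Proof.
move=> v0 sp; rewrite bform_mult_affine // /bform_mult /root_mult /= mul1r homog_eq0 //.
split=> -[p0 [dvd_mu ndvd_mu1]]; have E n := homog_dvdP (u / v) n p0 sp.
  by split=> //; split; [exact: (E mu).1 | apply/negP => /(E mu.+1).2].
by split=> //; split; [exact: (E mu).2 | move/(E mu.+1).1; exact/negP].
Qed.

End Homogenization.

Lemma within_continuousP {T Y : topologicalType} (S : set T) (f : T -> Y) :
  {within S, continuous f} <->
  (forall W, open W -> exists V, open V /\ S `&` f @^-1` W = S `&` V).
Proof.
split=> [/continuousP cf W oW|cf].
  by have /open_subspaceP [V oV VE] := cf W oW; exists V; rewrite setIC -VE setIC.
apply/continuousP => W oW; apply/open_subspaceP.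
by have [V [oV VE]] := cf W oW; exists V; rewrite // setIC -VE setIC.
Qed.

Section AffineChart.
Variable R : realType.

Lemma open_affine_chart (W : set R) :
  open W -> open [set p : R * R | p.2 != 0 /\ W (p.1 / p.2)].
Proof.
move=> oW; rewrite openE => p [p2 Wp].
have c : {for p, continuous (fun q : R * R => q.1 / q.2)}.
  by apply: continuousM; [exact: cvg_fst | apply: continuousV => //; exact: cvg_snd].
have nW : nbhs p [set q : R * R | W (q.1 / q.2)].
  by apply: c; apply: open_nbhs_nbhs; split.
have n2 : nbhs p [set q : R * R | q.2 != 0].
  apply: (@cvg_snd _ _ (nbhs p.1) (nbhs p.2) _ [set x : R | x != 0]).
  by apply: open_nbhs_nbhs; split=> //; exact: open_neq.
by apply: filterS (filterI nW n2) => q [].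
Qed.

Lemma open_rp1_affine (W : set R) : open W -> open_rp1 ((fun t => pclass (t, 1)) @` W).
Proof.
move=> oW; rewrite /open_rp1.
suff -> : [set p : R * R | p != (0, 0) /\ ((fun t => pclass (t, 1)) @` W) (pclass p)] =
          [set p : R * R | p.2 != 0 /\ W (p.1 / p.2)] by exact: open_affine_chart.
apply/seteqP; split=> p /=.
  move=> [p0 [t Wt e]]; have p2 : p.2 != 0.
    by apply/eqP => /(pclass_infty p0) pE; exact: (pclass_affine_neq_infty (etrans e pE)).
  by rewrite -(pclass_affine_inj (etrans e (pclass_affine p2))).
move=> [p2 Wp]; split; first by apply: contra p2 => /eqP ->.
by exists (p.1 / p.2) => //; exact/esym/pclass_affine.
Qed.

Lemma open_rp1_neq_infty : open_rp1 (~` [set pclass (1, 0)] : set (set (R * R))).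
Proof.
rewrite /open_rp1.
suff -> : [set p : R * R | p != (0, 0) /\ (~` [set pclass (1, 0)]) (pclass p)] =
          [set p : R * R | p.2 != 0 /\ setT (p.1 / p.2)].
  exact: open_affine_chart openT.
apply/seteqP; split=> p /=.
  by move=> [p0 ninf]; split=> //; apply/eqP => p2; apply: ninf; exact: pclass_infty.
move=> [p2 _]; split; first by apply: contra p2 => /eqP ->.
by rewrite pclass_affine //; exact: pclass_affine_neq_infty.
Qed.

Lemma open_rp1_affine_preimage (U : set (set (R * R))) :
  open_rp1 U -> open [set t : R | U (pclass (t, 1))].
Proof.
have ct1 : continuous (fun t : R => (t, 1 : R)).
  by move=> t; apply: (@cvg_pair _ _ _ (nbhs t) (nbhs t) (nbhs (1 : R))) => //; exact: cvg_cst.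
move=> /((continuousP _).1 ct1).
suff -> : (fun t : R => (t, 1 : R)) @^-1` [set p : R * R | p != (0, 0) /\ U (pclass p)] =
          [set t : R | U (pclass (t, 1))] by [].
by apply/seteqP; split=> t /=; [case | split=> //; exact: affine_pt_neq0].
Qed.

Lemma continuous_rp1_affineP m (S : set 'rV[R]_m) (theta : 'rV[R]_m -> set (R * R))
    (f : 'rV[R]_m -> R) :
  (forall x, S x -> theta x = pclass (f x, 1)) ->
  continuous_rp1 S theta <-> {within S, continuous f}.
Proof.
move=> thetaE.
have preimE U : S `&` theta @^-1` U = S `&` f @^-1` [set t | U (pclass (t, 1))].
  by apply/seteqP; split=> x [Sx]; rewrite /= thetaE.
rewrite within_continuousP; split=> ct W oW.
  have [V [oV VE]] := ct _ (open_rp1_affine oW); exists V; split=> //.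
  rewrite -VE preimE; congr (_ `&` _); apply/seteqP; split=> x /=.
    by move=> Wfx; exists (f x).
  by case=> t Wt /pclass_affine_inj <-.
have [V [oV VE]] := ct _ (open_rp1_affine_preimage oW).
by exists V; rewrite preimE.
Qed.

End AffineChart.

Lemma connected_index_const {T : topologicalType} {I : finType} (S : set T)
    (Q : I -> set T) :
  connected S ->
  (forall i, exists V, open V /\ S `&` ~` Q i = S `&` V) ->
  (forall x, S x -> exists! i, Q i x) ->
  forall i x, S x -> Q i x -> S `<=` Q i.
Proof.
move=> cS oQ uniqQ i x Sx Qix.
have /choice [V VE] := oQ.
have inV j y : S y -> (V j y <-> ~ Q j y).
  move=> Sy; have [_ E] := VE j; split.
    by move=> Vy; have : (S `&` V j) y by []; rewrite -E => -[].
  by move=> nQ; have : (S `&` ~` Q j) y by []; rewrite E => -[].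
have QiE y : S y -> (Q i y <-> forall j, j != i -> V j y).
  move=> Sy; split=> [Qiy j ji | HV].
    apply/(inV j y Sy) => Qjy; have [i' [_ u]] := uniqQ y Sy.
    by move/eqP: ji; apply; rewrite -(u _ Qjy) (u _ Qiy).
  have [j [Qjy _]] := uniqQ y Sy; have [<-//|ji] := eqVneq j i.
  by have := (inV j y Sy).1 (HV j ji).
have SQ : S `&` Q i = S.
  apply: cS; first by exists x.
  - exists (~` \bigcup_(j in [set j | j != i]) ~` V j).
      apply: closed_openC; apply: closed_bigcup; first exact: finite_finset.
      by move=> j _; apply: open_closedC; case: (VE j).
    apply/seteqP; split=> y [Sy] /=.
      by move=> Qiy; split=> // -[j /= ji]; apply; exact: (QiE y Sy).1.
    move=> nU; split=> //; apply/(QiE y Sy) => j ji.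
    by apply: contrapT => nV; apply: nU; exists j.
  - exists (~` V i); first by apply: open_closedC; case: (VE i).
    apply/seteqP; split=> y [Sy] /=.
      by move=> Qiy; split=> //; move/(inV i y Sy).
    by move=> nV; split=> //; apply: contrapT => nQ; apply: nV; apply/(inV i y Sy).
by rewrite -SQ => y [].
Qed.

Section RootSections.
Variables (R : realType) (m : nat) (S : set 'rV[R]_m) (P : {poly mpoly.mpoly m R}).

Lemma size_Eval x : (size (Eval x P) <= (degn P).+1)%N.
Proof.
rewrite /degn /Eval map_polyE; apply: leq_trans (size_Poly _) _.
by rewrite size_map; case: (size P).
Qed.

Lemma beval_HdP_affine x u v : v != 0 ->
  beval (HdP P x) (u, v) = v ^+ degn P * (Eval x P).[u / v].
Proof. by move=> v0; rewrite /HdP beval_homog_affine ?size_Eval. Qed.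

Lemma beval_HdP_infty x u :
  beval (HdP P x) (u, 0) = cval x (lead_coef P) * u ^+ degn P.
Proof. by rewrite /HdP beval_homog_infty /Eval coef_map lead_coefE. Qed.

Lemma HdP_affine_root x p : p.2 != 0 ->
  beval (HdP P x) p = 0 <-> (Eval x P).[p.1 / p.2] = 0.
Proof.
case: p => u v /= v0; rewrite beval_HdP_affine //.
by split=> [/eqP|->]; rewrite ?mulr0 // mulf_eq0 expf_eq0 (negbTE v0) andbF => /eqP.
Qed.

Lemma ZRP1_affine x t : ZRP1 P S (x, pclass (t, 1)) <-> S x /\ (Eval x P).[t] = 0.
Proof.
split=> -[Sx]; last first.
  move=> Et; split=> //; exists (t, 1); split; first exact: affine_pt_neq0.
  by split=> //; apply/(@HdP_affine_root x (t, 1) (oner_neq0 R)); rewrite /= divr1.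
move=> [p [p0 [/= e hb]]]; have [p2 <-] := pclass_affine_eqE p0 e.
by split=> //; exact/(HdP_affine_root x p2).
Qed.

Lemma ZRP1_infty x : ZRP1 P S (x, pclass (1, 0)) <-> S x /\ cval x (lead_coef P) = 0.
Proof.
split=> -[Sx]; last first.
  move=> c0; split=> //; exists (1, 0); split; first by rewrite xpair_eqE oner_eq0.
  by rewrite beval_HdP_infty c0 mul0r.
move=> [p [p0 [/= e]]]; have p2 := pclass_infty_snd p0 (esym e).
case: p p0 p2 {e} => u v /= p0 v0; subst v; have u0 : u != 0 by apply: contra p0 => /eqP ->.
by rewrite beval_HdP_infty => /eqP; rewrite mulf_eq0 expf_eq0 (negbTE u0) andbF orbF => /eqP.
Qed.

Lemma proj_root_mult_affine x t mu :
  proj_root_mult P x (pclass (t, 1)) mu <->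
  (Eval x P).[t] = 0 /\ root_mult (Eval x P) t mu.
Proof.
split=> [[p [p0 [e [hb hm]]]] | [Et hm]].
  have [p2 pt] := pclass_affine_eqE p0 e; rewrite -pt; split; first exact/HdP_affine_root.
  move: hm p2; case: p {p0 e hb pt} => u v /= hm v0.
  exact/(bform_mult_homog _ _ v0 (size_Eval x)).
exists (t, 1); split; first exact: affine_pt_neq0.
split=> //; split; first by apply/(@HdP_affine_root x (t, 1) (oner_neq0 R)); rewrite /= divr1.
by apply/(bform_mult_homog _ _ (oner_neq0 R) (size_Eval x)); rewrite divr1.
Qed.

Lemma delineable_of_affine_sections k (theta : 'I_k -> 'rV[R]_m -> set (R * R))
    (mu : 'I_k -> nat) :
  (forall l, continuous_rp1 S (theta l)) ->
  (forall l l' x, l != l' -> S x -> theta l x <> theta l' x) ->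
  (forall l, (1 <= mu l)%N /\ forall x, S x -> proj_root_mult P x (theta l x) (mu l)) ->
  (forall l x, S x -> theta l x <> pclass (1, 0)) ->
  (forall x t, S x -> (Eval x P).[t] = 0 -> exists l, theta l x = pclass (t, 1)) ->
  delineable P S.
Proof.
move=> ct dist mult ninf cover.
pose f l x := affine_coord (theta l x).
have thetaE l x : S x -> theta l x = pclass (f l x, 1).
  move=> Sx; have [_ /(_ x Sx) [p [p0 [e _]]]] := mult l.
  have [pinf|[t pt]] := pclass_cases p0; first by have := ninf l x Sx; rewrite e.
  by apply: affine_coordK; rewrite e pt.
have rootf l x : S x -> (Eval x P).[f l x] = 0 /\ root_mult (Eval x P) (f l x) (mu l).
  by move=> Sx; apply/proj_root_mult_affine; rewrite -thetaE //; exact: (mult l).2.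
exists k, f, mu; split; [|split; [|split]].
- by move=> l; apply/(continuous_rp1_affineP (thetaE l)).
- apply/seteqP; split=> -[x t] /=.
    move=> [Sx Et]; have [l e] := cover x t Sx Et; exists l; split=> //.
    by apply: pclass_affine_inj; rewrite -e -thetaE.
  by move=> [l [Sx ->]]; split=> //; case: (rootf l x Sx).
- move=> l l' x ll' Sx; apply/eqP => e; apply: (dist l l' x ll' Sx).
  by rewrite (thetaE l) // (thetaE l') // e.
- by move=> l; split; [case: (mult l) | move=> x Sx; case: (rootf l x Sx)].
Qed.

Lemma delineable_of_proj_delineable :
  (forall x, S x -> cval x (lead_coef P) != 0) ->
  proj_delineable P S -> delineable P S.
Proof.
move=> lc [k [theta [mu [_ [ct [ZE [dist mult]]]]]]].
apply: (delineable_of_affine_sections ct dist mult).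
  move=> l x Sx e; have /ZRP1_infty [_ /eqP] : ZRP1 P S (x, pclass (1, 0)).
    by rewrite -e ZE; exists l.
  by rewrite (negbTE (lc x Sx)).
move=> x t Sx Et; have : ZRP1 P S (x, pclass (t, 1)) by apply/ZRP1_affine.
by rewrite ZE => -[l [_ /= e]]; exists l.
Qed.

Lemma proj_delineable_of_delineable :
  (forall x, S x -> cval x (lead_coef P) != 0) ->
  delineable P S -> proj_delineable P S.
Proof.
move=> lc [k [f [mu [ct [ZE [dist mult]]]]]].
have rootf l x : S x -> (Eval x P).[f l x] = 0.
  by move=> Sx; have [] : ZR P S (x, f l x) by rewrite ZE; exists l.
exists k, (fun l x => pclass (f l x, 1)), mu; split; [|split; [|split; [|split]]].
- by move=> l x _; exists (f l x, 1); split; first exact: affine_pt_neq0.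
- by move=> l; apply/(continuous_rp1_affineP (fun _ _ => erefl)).
- apply/seteqP; split=> -[x c] /= Z; last first.
    by case: Z => l [Sx ->]; apply/ZRP1_affine; split=> //; exact: rootf.
  have [Sx [p [p0 [/= cE _]]]] := Z.
  have [pinf|[t pt]] := pclass_cases p0; move: Z; rewrite cE ?pinf ?pt.
    by move/ZRP1_infty => [_ /eqP]; rewrite (negbTE (lc x Sx)).
  by move/ZRP1_affine => Z; have : ZR P S (x, t) := Z; rewrite ZE => -[l [_ /= ->]]; exists l.
- move=> l l' x ll' Sx /pclass_affine_inj e.
  by have := dist l l' x ll' Sx; rewrite e eqxx.
- move=> l; have [mu1 multl] := mult l; split=> // x Sx.
  by apply/proj_root_mult_affine; split; [exact: rootf | exact: multl].
Qed.

Lemma delineable_of_proj_delineable_connected : connected S ->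
  (forall x, S x -> cval x (lead_coef P) = 0) ->
  proj_delineable P S -> delineable P S.
Proof.
move=> cS lc [k [theta [mu [_ [ct [ZE [dist mult]]]]]]].
have [[x0 Sx0]|noS] := pselect (exists x, S x); last first.
  apply: (delineable_of_affine_sections ct dist mult) => [l x Sx|x t Sx];
  by case: noS; exists x.
have infE x : S x -> exists! l, theta l x = pclass (1, 0).
  move=> Sx; have : ZRP1 P S (x, pclass (1, 0)) by apply/ZRP1_infty; split=> //; exact: lc.
  rewrite ZE => -[l [_ /= e]]; exists l; split=> // l' e'.
  by apply: contrapT => /eqP ll'; apply: (dist l l' x ll' Sx); rewrite -e e'.
have [l0 [inf0 _]] := infE x0 Sx0.
have inf_l0 : S `<=` (fun x => theta l0 x = pclass (1, 0)).
  apply: (connected_index_const (Q := fun l x => theta l x = pclass (1, 0))) cS _ infE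
    l0 x0 Sx0 inf0.
  by move=> l; exact (ct l _ (@open_rp1_neq_infty R)).
apply: (@delineable_of_affine_sections k.-1 (fun j => theta (lift l0 j))
  (fun j => mu (lift l0 j))).
- by move=> j; exact: ct.
- by move=> j j' x jj' Sx; apply: dist; rewrite // (inj_eq (@lift_inj _ l0)).
- by move=> j; exact: mult.
- move=> j x Sx e; apply: (dist (lift l0 j) l0 x _ Sx); first by rewrite eq_sym neq_lift.
  by rewrite e inf_l0.
- move=> x t Sx Et; have : ZRP1 P S (x, pclass (t, 1)) by apply/ZRP1_affine.
  rewrite ZE => -[l [_ /= e]].
  case: (unliftP l0 l) => [j lE|lE]; first by exists j; rewrite -lE e.
  by move: e; rewrite lE inf_l0 // => /pclass_affine_neq_infty.
Qed.

End RootSections.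

Theorem mainTheorem6 (R : realType) (m : nat) (S : set 'rV[R]_m)
  (P : {poly mpoly.mpoly m R}) :
  ((forall x, S x -> cval x (lead_coef P) != 0) ->
     (proj_delineable P S <-> delineable P S)) /\
  (connected S -> (forall x, S x -> cval x (lead_coef P) = 0) ->
     proj_delineable P S -> delineable P S).
Proof.
split=> [lc|]; last exact: delineable_of_proj_delineable_connected.
by split; [exact: delineable_of_proj_delineable | exact: proj_delineable_of_delineable].
Qed.
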